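(* Let $\mathcal{W}$ be a periodic labeled wedge of period $p$ and preperiod $q$, with associated graph $\Gamma$, and for $k\in\mathbb{N}$ let $A_k$ be the adjacency operator of $\Gamma_k=\Gamma/\equiv_{kp,q}$. Then for every $k\in\mathbb{N}$, the characteristic polynomial of $A_k$ acting on $\mathbb{R}^{\mathcal{V}_k}$ is the product of the characteristic polynomial of $A_1$ acting on $\mathbb{R}^{\mathcal{V}_1}$, of cyclotomic polynomials, and of $x^d$ for some integer $d\ge0$.
   Context: The unlabeled wedge is $\Sigma=\{(i,j)\in\mathbb{N}^2:1\le i\le j\}$; a labeled wedge is a map $\Phi:\Sigma\to\{N,S,E\}$ (non-separated, separated, equivalent). Its graph $\Gamma$ has vertex set $\Sigma$ and edges: none out of an $E$-vertex; one edge $(i,j)\to(i+1,j+1)$ out of an $N$-vertex; two edges $(i,j)\to(1,i+1)$ and $(i,j)\to(1,j+1)$ out of an $S$-vertex. For integers $p\ge1$, $q\ge0$, $\equiv_{p,q}$ on $\mathbb{N}$ is: $i\equiv_{p,q}j$ iff $i=j$, or $\min\{i,j\}\ge q+1$ and $i\equiv j\pmod p$; on $\Sigma$, $(i,j)\equiv_{p,q}(k,l)$ iff ($i\equiv_{p,q}k$ and $j\equiv_{p,q}l$) or ($i\equiv_{p,q}l$ and $j\equiv_{p,q}k$). $\mathcal{W}$ is periodic of period $p$ and preperiod $q$ if (1) $\equiv_{p,q}$-equivalent vertices have the same label and (2) $(i,j)$ is labeled $E$ iff $i\equiv_{p,q}j$. For such $\mathcal{W}$ and $k\ge1$, $\Gamma_k$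 is the quotient graph: its vertex set $\mathcal{V}_k$ is the set of $\equiv_{kp,q}$-classes, and the number of edges from $[v]$ to $[w]$ is the number of edges in $\Gamma$ from $v$ to members of $[w]$ (independent of the representative $v$). The adjacency operator $A_k$ on $\mathbb{R}^{\mathcal{V}_k}$ is $A_k(e_v)=\sum_{w}\#(v\to w)\,e_w$. Characteristic polynomials are $\det(xI-A)$. *)

From HB Require Import structures.
From mathcomp Require Import all_boot all_order all_algebra all_field.
From mathcomp Require Import reals.
Set Implicit Arguments. Unset Strict Implicit. Unset Printing Implicit Defensive.
Import Order.TTheory GRing.Theory Num.Theory.

(* Labels: non-separated, separated, equivalent. *)
Inductive label := LN | LS | LE.

(* A labeled wedge: a labeling of pairs; only values on the unlabeled wedge
   Sigma = {(i,j) : 1 <= i <= j} matter. *)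
Definition labeling := nat -> nat -> label.

Definition in_wedge (v : nat * nat) : bool := (1 <= v.1) && (v.1 <= v.2).

Definition eqN (p q i j : nat) : bool :=
  (i == j) || ((q.+1 <= minn i j) && (i %% p == j %% p)).

Definition eqW (p q : nat) (v w : nat * nat) : bool :=
  (eqN p q v.1 w.1 && eqN p q v.2 w.2) || (eqN p q v.1 w.2 && eqN p q v.2 w.1).

Definition periodic (Phi : labeling) (p q : nat) : Prop :=
  (forall v w, in_wedge v -> in_wedge w -> eqW p q v w -> Phi v.1 v.2 = Phi w.1 w.2)
  /\ (forall v, in_wedge v -> (Phi v.1 v.2 = LE <-> eqN p q v.1 v.2)).

Definition out_edges (Phi : labeling) (v : nat * nat) : seq (nat * nat) :=
  match Phi v.1 v.2 with
  | LE => [::]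
  | LN => [:: (v.1.+1, v.2.+1)]
  | LS => [:: (1, v.1.+1); (1, v.2.+1)]
  end.

Definition nedges (Phi : labeling) (m q : nat) (v w : nat * nat) : nat :=
  count (fun t => eqW m q t w) (out_edges Phi v).

(* The vertex set V of Gamma / ==_{m,q}: each class has exactly one canonical
   representative (a,b) with 1 <= a <= b <= q + m; the ordinal pair (x1,x2)
   stands for the representative (x1+1, x2+1). *)
Definition qvert (n : nat) := {x : 'I_n * 'I_n | x.1 <= x.2}.

Definition qrep (n : nat) (x : qvert n) : nat * nat :=
  ((val x).1.+1, (val x).2.+1).

(* Matrix of the adjacency operator A (A e_v = sum_w #(v -> w) e_w),
   with respect to an enumeration of V; column v, row w. *)
Definition adjmx (R : realType) (Phi : labeling) (m q : nat)
  : 'M[R]_#|{: qvert (q + m)}| :=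
  \matrix_(i, j) ((nedges Phi m q (qrep (enum_val j)) (qrep (enum_val i)))%:R)%R.

Definition A_k (R : realType) (Phi : labeling) (p q k : nat) :=
  adjmx R Phi (k * p) q.

From HB Require Import structures.
From mathcomp Require Import all_boot all_order all_algebra all_field.
From mathcomp Require Import reals zify.
Import GRing.Theory.
Set Implicit Arguments. Unset Strict Implicit. Unset Printing Implicit Defensive.

(* Reducing coordinates modulo [p] maps the vertices of [Gamma_k] onto those of
   [Gamma_1] and has a section; the corresponding matrices satisfy
   [P A_k = A_1 P] and [P S = 1], so in a suitable basis [A_k] is block
   triangular with diagonal blocks [A_1] and the restriction [Y] of [A_k] to
   [ker P].  This kernel is spanned by the differences [e_(a,b+p) - e_(a,b)]
   with [b] past the preperiod, and by periodicity of the labels [A_k] sends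
   each of them to another one or to [0], i.e. acts on them through a self-map
   of a finite set; hence [A_k^(N+L) = A_k^N] on [ker P].  Every eigenvalue of
   [Y] is therefore [0] or a root of unity, and as [char_poly Y] has rational
   coefficients it is a product of cyclotomic polynomials and a power of [X]. *)

Section ClassIndex.
Variable q : nat.

(* For [i >= 1]: the canonical representative of the [==_{M,q}]-class of [i],
   shifted down by one as in [qrep]. *)
Definition cidx (M i : nat) : nat := if i <= q then i.-1 else q + (i.-1 - q) %% M.

Lemma cidx_lt M i : 0 < M -> cidx M i < q + M.
Proof.
by rewrite /cidx => M0; case: (leqP i q) => Hi; [lia | rewrite ltn_add2l ltn_mod].
Qed.

Lemma cidx_small M i : 0 < i -> i <= q + M -> cidx M i = i.-1.
Proof. by rewrite /cidx => i0 iM; case: (leqP i q) => // Hi; rewrite modn_small; lia. Qed.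

Lemma cidx_ge M i : q < i -> q <= cidx M i.
Proof. by rewrite /cidx; case: (leqP i q) => //; lia. Qed.

Lemma eqN_cidx M i j : 0 < M -> 0 < i -> 0 < j -> eqN M q i j = (cidx M i == cidx M j).
Proof.
move=> M0 i0 j0; rewrite /eqN /cidx.
case: (leqP i q) => Hi; case: (leqP j q) => Hj.
- have -> : (q.+1 <= minn i j) = false by lia.
  by rewrite orbF; apply/eqP/eqP; lia.
- have -> : (q.+1 <= minn i j) = false by lia.
  rewrite orbF; apply/eqP/eqP => H; first lia.
  by have := leq_addr ((j.-1 - q) %% M) q; lia.
- have -> : (q.+1 <= minn i j) = false by lia.
  rewrite orbF; apply/eqP/eqP => H; first lia.
  by have := leq_addr ((i.-1 - q) %% M) q; lia.
- have -> : (q.+1 <= minn i j) = true by lia.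
  have [x ->] : exists x, i = x + q.+1 by exists (i.-1 - q); lia.
  have [y ->] : exists y, j = y + q.+1 by exists (j.-1 - q); lia.
  rewrite andTb eqn_add2l !addnS /= !addnK -!addnS eqn_modDr eqn_add2r.
  by case: eqP => // ->; rewrite eqxx.
Qed.

Lemma cidxS M i j : 0 < M -> 0 < i -> 0 < j -> cidx M i = cidx M j ->
  cidx M i.+1 = cidx M j.+1.
Proof.
move=> M0 i0 j0 /eqP; rewrite -eqN_cidx // => eqij; apply/eqP; rewrite -eqN_cidx //.
case/orP: eqij => [/eqP -> | /andP [qij /eqP eqp]]; first by rewrite /eqN eqxx.
apply/orP; right; apply/andP; split; first by move: qij; rewrite !leq_min; lia.
by rewrite -[i.+1]addn1 -[j.+1]addn1 -modnDml eqp modnDml.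
Qed.

Lemma cidxDr M i j k : 0 < M -> 0 < i -> 0 < j -> cidx M i = cidx M j ->
  cidx M (i + k) = cidx M (j + k).
Proof.
move=> M0 i0 j0 eqij; elim: k => [|k IH]; first by rewrite !addn0.
by rewrite !addnS; apply: cidxS; rewrite ?addn_gt0 ?i0 ?j0.
Qed.

Lemma cidx_idem M i : 0 < M -> cidx M (cidx M i).+1 = cidx M i.
Proof. by move=> M0; rewrite cidx_small // (cidx_lt i M0). Qed.

Lemma cidx_dvd p m i : p %| m -> 0 < i -> cidx p (cidx m i).+1 = cidx p i.
Proof.
rewrite /cidx => pm i0; case: (leqP i q) => Hi; first by rewrite prednK // Hi.
have -> : ((q + (i.-1 - q) %% m).+1 <= q) = false by lia.
by rewrite /= addKn modn_dvdm.
Qed.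

Lemma cidxD_period M i : q < i -> cidx M (i + M) = cidx M i.
Proof.
rewrite /cidx => qi; have -> : (i + M <= q) = false by lia.
have -> : (i <= q) = false by lia.
have -> : (i + M).-1 - q = (i.-1 - q) + M by lia.
by rewrite modnDr.
Qed.

End ClassIndex.

Lemma iter_periodic (T : Type) (f : T -> T) x i d :
  iter (i + d) f x = iter i f x ->
  forall r c, i <= r -> iter (r + c * d) f x = iter r f x.
Proof.
move=> per r c ir.
have per_c : iter (i + c * d) f x = iter i f x.
  elim: c => [|c IH]; first by rewrite mul0n addn0.
  by rewrite mulSn addnA (addnC i d) -addnA iterD IH -iterD addnC per.
by rewrite -(subnK ir) -addnA iterD per_c -iterD.
Qed.

Lemma iter_card_fact (T : finType) (f : T -> T) x :
  iter (#|T| + #|T|`!) f x = iter #|T| f x.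
Proof.
pose g (i : 'I_#|T|.+1) := iter i f x.
have /injectivePn [i [j neq_ij eq_g]] : ~~ injectiveb g.
  by apply/injectiveP => /leq_card; rewrite card_ord ltnn.
wlog lt_ij : i j neq_ij eq_g / i < j.
  move=> W; case: (ltngtP i j) => [|gt_ij|/val_inj eq_ij]; first exact: W.
    by apply: (W j i); rewrite 1?eq_sym.
  by rewrite eq_ij eqxx in neq_ij.
have d_bounds : 0 < j - i <= #|T| by have := ltn_ord j; lia.
have [c ->] : exists c, #|T|`! = c * (j - i).
  by exists (#|T|`! %/ (j - i)); rewrite divnK // dvdn_fact.
apply: (iter_periodic (i := i)); first by rewrite subnKC ?(ltnW lt_ij).
by have := ltn_ord i; lia.
Qed.

Local Open Scope ring_scope.

Section MapMatrix.
Variable R : nzRingType.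

Definition evec (T : finType) (y : T) : 'cV[R]_#|{: T}| := delta_mx (enum_rank y) 0.

Lemma mx_evecP (T : finType) n (M1 M2 : 'M[R]_(n, #|{: T}|)) :
  (forall y, M1 *m evec y = M2 *m evec y) -> M1 = M2.
Proof.
move=> eqM; apply/matrixP => i j.
have := congr1 (fun u : 'cV_n => u i 0) (eqM (enum_val j)).
by rewrite /evec enum_valK -!colE !mxE.
Qed.

Definition fun_mx (T U : finType) (f : T -> U) : 'M[R]_(#|{: U}|, #|{: T}|) :=
  \matrix_(i, j) (f (enum_val j) == enum_val i)%:R.

Lemma fun_mx_evec (T U : finType) (f : T -> U) y : fun_mx f *m evec y = evec (f y).
Proof.
apply/matrixP => i j; rewrite /evec -colE !mxE enum_rankK (ord1 j) eqxx andbT.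
by rewrite -(inj_eq enum_val_inj) enum_rankK eq_sym.
Qed.

End MapMatrix.

Arguments evec {R T}.
Arguments fun_mx {R T U}.

Section Vertices.
Variable n : nat.
Implicit Types a b : 'I_n.

Definition omin a b : 'I_n := if (a <= b)%N then a else b.
Definition omax a b : 'I_n := if (a <= b)%N then b else a.

Lemma omin_le_max a b : (omin a b <= omax a b)%N.
Proof. by rewrite /omin /omax; case: (leqP a b) => // /ltnW. Qed.

Lemma val_omin a b : val (omin a b) = minn a b.
Proof. by rewrite /omin /minn; case: (ltngtP a b). Qed.

Lemma val_omax a b : val (omax a b) = maxn a b.
Proof. by rewrite /omax /maxn; case: (ltngtP a b). Qed.

Definition vert a b : qvert n := exist _ (omin a b, omax a b) (omin_le_max a b).

Lemma vertC a b : vert a b = vert b a.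
Proof.
by apply: val_inj; congr pair; apply: val_inj; rewrite ?val_omin ?val_omax (minnC, maxnC).
Qed.

Lemma vert_val (x : qvert n) : vert (val x).1 (val x).2 = x.
Proof. by apply: val_inj; case: x => [[a b] /= le_ab]; rewrite /omin /omax /= le_ab. Qed.

End Vertices.

Lemma vert_omin_omax n n' (f : 'I_n -> 'I_n') (a b : 'I_n) :
  vert (f (omin a b)) (f (omax a b)) = vert (f a) (f b).
Proof. by rewrite /omin /omax; case: (leqP a b) => // _; rewrite vertC. Qed.

Lemma eq_pair_minmax (a b c d : nat) : (c <= d)%N ->
  ((a == c) && (b == d)) || ((a == d) && (b == c)) = (minn a b == c) && (maxn a b == d).
Proof.
by move=> le_cd; case: (a =P c); case: (b =P d); case: (a =P d); case: (b =P c) => //=; lia.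
Qed.

Section QuotientGraph.
Variables (R : nzRingType) (Phi : labeling) (q : nat).

Definition adj_mx M : 'M[R]_#|{: qvert (q + M)}| :=
  \matrix_(i, j) (nedges Phi M q (qrep (enum_val j)) (qrep (enum_val i)))%:R.

Variables (M : nat) (M_gt0 : (0 < M)%N).

Definition cls (t : nat) : 'I_(q + M) := Ordinal (cidx_lt q t M_gt0).
Definition osucc (c : 'I_(q + M)) : 'I_(q + M) := cls c.+2.
Definition ozero : 'I_(q + M) := cls 1.
Definition vcls (t : nat * nat) : qvert (q + M) := vert (cls t.1) (cls t.2).
Definition lab n (a b : 'I_n) : label := Phi (omin a b).+1 (omax a b).+1.

Lemma cidx_ord (c : 'I_(q + M)) : cidx q M c.+1 = c.
Proof. by rewrite cidx_small. Qed.

Lemma eqW_vcls (v : nat * nat) (x : qvert (q + M)) :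
  (0 < v.1)%N -> (0 < v.2)%N -> eqW M q v (qrep x) = (vcls v == x).
Proof.
move=> v1_gt0 v2_gt0; rewrite /eqW /qrep /= !eqN_cidx // !cidx_ord.
case: x => [[a b] /= le_ab]; rewrite eq_pair_minmax //.
by rewrite -val_eqE /= xpair_eqE -!val_eqE /= !val_omin !val_omax.
Qed.

Lemma out_edges_gt0 (v : nat * nat) :
  all (fun t => (0 < t.1)%N && (0 < t.2)%N) (out_edges Phi v).
Proof. by rewrite /out_edges; case: (Phi v.1 v.2). Qed.

Lemma adj_mx_evec y :
  adj_mx M *m evec y = \sum_(t <- out_edges Phi (qrep y)) evec (vcls t).
Proof.
apply/matrixP => i j; rewrite /evec -colE !mxE summxE (ord1 j) enum_rankK /nedges.
elim: (out_edges Phi (qrep y)) (out_edges_gt0 (qrep y)) => [|t s IH].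
  by rewrite big_nil.
rewrite /= big_cons => /andP [/andP [t1_gt0 t2_gt0] s_gt0]; rewrite natrD IH //.
rewrite eqW_vcls // mxE eqxx andbT; congr (_ + _).
by rewrite -(inj_eq enum_val_inj) enum_rankK eq_sym.
Qed.

Lemma adj_mx_vert (a b : 'I_(q + M)) :
  adj_mx M *m evec (vert a b) = match lab a b with
    | LE => 0
    | LN => evec (vert (osucc a) (osucc b))
    | LS => evec (vert ozero (osucc a)) + evec (vert ozero (osucc b)) end.
Proof.
rewrite adj_mx_evec /out_edges /qrep /= /lab.
case: (Phi (omin a b).+1 (omax a b).+1); rewrite ?big_nil // !big_cons big_nil addr0.
- by rewrite /vcls /= -!/(osucc _) vert_omin_omax.
- rewrite /vcls /= -/ozero -!/(osucc _) /omin /omax.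
  by case: (leqP a b) => // _; rewrite addrC.
Qed.

End QuotientGraph.

Section Projection.
Variables (R : nzRingType) (Phi : labeling) (q p m : nat).
Hypotheses (p_gt0 : (0 < p)%N) (m_gt0 : (0 < m)%N) (p_dvd_m : (p %| m)%N).
Hypothesis Phi_per : periodic Phi p q.

Local Notation Vm := (qvert (q + m)).
Local Notation Vp := (qvert (q + p)).
Local Notation Am := (adj_mx R Phi q m).
Local Notation Ap := (adj_mx R Phi q p).

Definition red (c : 'I_(q + m)) : 'I_(q + p) := cls q p_gt0 c.+1.
Definition sec (c : 'I_(q + p)) : 'I_(q + m) := cls q m_gt0 c.+1.
Definition redv (x : Vm) : Vp := vert (red (val x).1) (red (val x).2).
Definition secv (w : Vp) : Vm := vert (sec (val w).1) (sec (val w).2).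

Lemma redv_vert a b : redv (vert a b) = vert (red a) (red b).
Proof. exact: vert_omin_omax. Qed.

Lemma secv_vert a b : secv (vert a b) = vert (sec a) (sec b).
Proof. exact: vert_omin_omax. Qed.

Lemma red_osucc c : red (osucc m_gt0 c) = osucc p_gt0 (red c).
Proof.
apply: val_inj; rewrite /= cidx_dvd //; symmetry.
by apply: cidxS => //; apply: cidx_idem.
Qed.

Lemma red_ozero : red (ozero q m_gt0) = ozero q p_gt0.
Proof. by apply: val_inj; rewrite /= cidx_dvd. Qed.

Lemma red_sec c : red (sec c) = c.
Proof. by apply: val_inj; rewrite /= cidx_dvd // cidx_ord. Qed.

Lemma redv_secv w : redv (secv w) = w.
Proof. by rewrite /secv redv_vert !red_sec vert_val. Qed.

Lemma lab_red (a b : 'I_(q + m)) : lab Phi a b = lab Phi (red a) (red b).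
Proof.
rewrite /lab; apply: (Phi_per.1 ((omin a b).+1, (omax a b).+1)
  ((omin (red a) (red b)).+1, (omax (red a) (red b)).+1)).
- by rewrite /in_wedge /= ltnS omin_le_max.
- by rewrite /in_wedge /= ltnS omin_le_max.
rewrite /eqW /= !eqN_cidx // !cidx_ord eq_pair_minmax ?omin_le_max //.
rewrite !val_omin !val_omax /= /omin /omax.
by case: (leqP a b) => _; rewrite ?(minnC (red a)) ?(maxnC (red a)) !eqxx.
Qed.

Definition Pmx : 'M[R]_(#|{: Vp}|, #|{: Vm}|) := fun_mx redv.
Definition Smx : 'M[R]_(#|{: Vm}|, #|{: Vp}|) := fun_mx secv.

Lemma Pmx_adj_mx : Pmx *m Am = Ap *m Pmx.
Proof.
apply: mx_evecP => y; rewrite -(vert_val y) -!mulmxA /Pmx fun_mx_evec redv_vert.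
rewrite !adj_mx_vert -lab_red.
by case: (lab Phi _ _);
  rewrite ?mulmx0 ?mulmxDr ?fun_mx_evec ?redv_vert ?red_osucc ?red_ozero.
Qed.

Lemma Pmx_Smx : Pmx *m Smx = 1%:M.
Proof.
by apply: mx_evecP => w; rewrite -mulmxA /Pmx /Smx !fun_mx_evec redv_secv mul1mx.
Qed.

Definition shift (b : 'I_(q + m)) : 'I_(q + m) := cls q m_gt0 (b.+1 + p).

Lemma red_shift (b : 'I_(q + m)) : (q <= b)%N -> red (shift b) = red b.
Proof. by move=> qb; apply: val_inj; rewrite /= !cidx_dvd ?addn_gt0 // cidxD_period. Qed.

Lemma lab_shift (a b : 'I_(q + m)) : (q <= b)%N -> lab Phi a (shift b) = lab Phi a b.
Proof. by move=> qb; rewrite lab_red [RHS]lab_red red_shift. Qed.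

Lemma osucc_shift (b : 'I_(q + m)) : osucc m_gt0 (shift b) = shift (osucc m_gt0 b).
Proof.
apply: val_inj => /=.
have idem_shift := cidx_idem q (b.+1 + p) m_gt0.
have idem_succ := cidx_idem q b.+2 m_gt0.
rewrite (cidxS m_gt0 _ _ idem_shift) ?addn_gt0 //.
by rewrite (cidxDr p m_gt0 _ _ idem_succ) // addSn.
Qed.

Lemma osucc_ge (b : 'I_(q + m)) : (q <= b)%N -> (q <= osucc m_gt0 b)%N.
Proof. by move=> qb; apply: cidx_ge; rewrite ltnS ltnW. Qed.

Definition kgen := option ('I_(q + m) * 'I_(q + m)).

Definition kvec (t : kgen) : 'cV[R]_#|{: Vm}| :=
  if t is Some (a, b) then evec (vert a (shift b)) - evec (vert a b) else 0.

Definition kstep (t : kgen) : kgen :=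
  if t is Some (a, b) then
    match lab Phi a b with
    | LE => None
    | LN => Some (osucc m_gt0 a, osucc m_gt0 b)
    | LS => Some (ozero q m_gt0, osucc m_gt0 b)
    end
  else None.

Definition kvalid (t : kgen) : bool := if t is Some (_, b) then (q <= b)%N else true.

Lemma adj_mx_kvec t : kvalid t -> kvalid (kstep t) /\ Am *m kvec t = kvec (kstep t).
Proof.
case: t => [[a b]|] /=; last by rewrite mulmx0.
move=> qb; rewrite mulmxBr !adj_mx_vert lab_shift //.
case: (lab Phi a b); rewrite /= ?osucc_ge ?osucc_shift ?subrr //.
by rewrite opprD addrACA subrr add0r.
Qed.

Lemma adj_mxX_kvec t j : kvalid t -> Am ^+ j *m kvec t = kvec (iter j kstep t).
Proof.
elim: j t => [|j IH] t t_valid; first by rewrite expr0 mul1mx.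
have [step_valid step_eq] := adj_mx_kvec t_valid.
by rewrite exprSr -mulmxE -mulmxA step_eq IH // iterSr.
Qed.

Definition Nk := #|{: kgen}|.
Definition Gmx := Am ^+ (Nk + Nk`!) - Am ^+ Nk.

Lemma Gmx_kvec t : kvalid t -> Gmx *m kvec t = 0.
Proof. by move=> t_valid; rewrite mulmxBl !adj_mxX_kvec // iter_card_fact subrr. Qed.

Lemma sec_red_small (b : 'I_(q + m)) : (b < q + p)%N -> sec (red b) = b.
Proof.
have le_pm : (p <= m)%N := dvdn_leq m_gt0 p_dvd_m.
by move=> b_lt; apply: val_inj; rewrite /= !cidx_small //; lia.
Qed.

Lemma Gmx_fiber (a b : 'I_(q + m)) :
  Gmx *m (evec (vert a b) - evec (vert a (sec (red b)))) = 0.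
Proof.
(* Telescope along [b, b - p, b - 2p, ...] down to [sec (red b) < q + p]. *)
have [n] := ubnP (b : nat); elim: n b => // n IH b /ltnSE le_bn.
have [b_lt | b_ge] := ltnP b (q + p); first by rewrite sec_red_small // subrr mulmx0.
have b'_lt : (b - p < q + m)%N by have := ltn_ord b; lia.
pose b' := Ordinal b'_lt.
have qb' : (q <= b')%N by rewrite /=; lia.
have shift_b' : shift b' = b.
  apply: val_inj => /=; have -> : ((b - p).+1 + p = b.+1)%N by lia.
  exact: cidx_ord.
rewrite -shift_b' red_shift //.
have -> : evec (vert a (shift b')) - evec (vert a (sec (red b'))) =
    kvec (Some (a, b')) + (evec (vert a b') - evec (vert a (sec (red b')))).
  by rewrite addrA subrK.
by rewrite mulmxDr Gmx_kvec // add0r IH // /b' /=; lia.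
Qed.

Lemma Gmx_ker : Gmx *m (1%:M - Smx *m Pmx) = 0.
Proof.
apply: mx_evecP => y; rewrite mul0mx -mulmxA [(1%:M - _) *m _]mulmxBl mul1mx -mulmxA.
rewrite !fun_mx_evec -(vert_val y) redv_vert secv_vert.
set a := (val y).1; set b := (val y).2.
have -> : evec (vert a b) - evec (vert (sec (red a)) (sec (red b))) =
    (evec (vert a b) - evec (vert a (sec (red b)))) +
    (evec (vert (sec (red b)) a) - evec (vert (sec (red b)) (sec (red a))))
    :> 'cV[R]_#|{: Vm}|.
  by rewrite (vertC _ a) (vertC _ (sec (red a))) addrA subrK.
by rewrite mulmxDr !Gmx_fiber addr0.
Qed.

Lemma card_qvert_le : (#|{: Vp}| <= #|{: Vm}|)%N.
Proof. exact: leq_card secv (can_inj redv_secv). Qed.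

End Projection.

Section QuotientCharPoly.
Variable F : fieldType.

Lemma right_inverse_completion n1 r (P : 'M[F]_(n1, n1 + r)) (S : 'M_(n1 + r, n1)) :
  P *m S = 1%:M -> exists K : 'M_(n1 + r, r), P *m K = 0 /\ row_mx S K \in unitmx.
Proof.
move=> PS.
have rkP : \rank P^T = n1.
  rewrite mxrank_tr; apply/eqP; rewrite eqn_leq rank_leq_row /=.
  by rewrite -{1}(mxrank1 F n1) -PS mxrankM_maxl.
have rk : \rank (kermx P^T) = r by rewrite mxrank_ker rkP addKn.
pose K0 := castmx (rk, erefl) (row_base (kermx P^T)) : 'M_(r, n1 + r).
have free_K0 : row_free K0 by rewrite row_free_castmx row_base_free.
have K0P : K0 *m P^T = 0.
  by apply/sub_kermxP; rewrite eqmx_cast eq_row_base.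
exists K0^T; split; first by rewrite -[P]trmxK -trmx_mul K0P trmx0.
rewrite -unitmx_tr -row_free_unit; apply/inj_row_free => v.
rewrite tr_row_mx trmxK -[v]hsubmxK mul_row_col => vT0.
have := congr1 (mulmx^~ P^T) vT0.
rewrite mulmxDl -!mulmxA K0P -trmx_mul PS trmx1 mulmx1 mulmx0 addr0 mul0mx => vl0.
move: vT0; rewrite vl0 mul0mx add0r => /eqP; rewrite mulmx_free_eq0 // => /eqP ->.
by rewrite row_mx0.
Qed.

Lemma char_poly_similar n (A T : 'M[F]_n) : T \in unitmx ->
  char_poly (invmx T *m A *m T) = char_poly A.
Proof.
move=> uT; rewrite /char_poly /char_poly_mx.
have -> : 'X%:M - map_mx polyC (invmx T *m A *m T)
    = map_mx polyC (invmx T) *m ('X%:M - map_mx polyC A) *m map_mx polyC T.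
  rewrite mulmxBr mulmxBl mul_mx_scalar -scalemxAl -map_mxM mulVmx // map_mx1 scalemx1.
  by rewrite !map_mxM.
rewrite !det_mulmx !det_map_mx mulrC mulrA -rmorphM -det_mulmx mulmxV //.
by rewrite det1 rmorph1 mul1r.
Qed.

Lemma char_poly_lblock n1 n2 (A1 : 'M[F]_n1) (C : 'M_(n2, n1)) (Y : 'M_n2) :
  char_poly (block_mx A1 0 C Y) = char_poly A1 * char_poly Y.
Proof.
rewrite /char_poly /char_poly_mx map_block_mx scalar_mx_block.
by rewrite opp_block_mx add_block_mx raddf0 !oppr0 add0r det_lblock.
Qed.

Lemma char_poly_quotient_block n1 r (A : 'M[F]_(n1 + r)) (A1 : 'M_n1)
    (P : 'M_(n1, n1 + r)) (S : 'M_(n1 + r, n1)) (N L : nat) :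
  P *m S = 1%:M -> P *m A = A1 *m P ->
  (A ^+ (N + L) - A ^+ N) *m (1%:M - S *m P) = 0 ->
  exists Y : 'M_r, char_poly A = char_poly A1 * char_poly Y /\ Y ^+ (N + L) = Y ^+ N.
Proof.
move=> PS PA per_ker.
have [K [PK uT]] := right_inverse_completion PS.
set T := row_mx S K in uT; pose M := invmx T *m A *m T.
have AT : A *m T = T *m M by rewrite /M !mulmxA mulmxV // mul1mx.
have PT : P *m T = row_mx 1%:M 0 by rewrite mul_mx_row PS PK.
have [ulM urM] : ulsubmx M = A1 /\ ursubmx M = 0.
  have := congr1 (mulmx P) AT; rewrite mulmxA PA -mulmxA PT mulmxA PT.
  rewrite -[M in RHS]submxK mul_row_block mul_mx_row mulmx1 mulmx0 !mul1mx !mul0mx !addr0.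
  by case/eq_row_mx => -> ->.
set Y := drsubmx M.
have AK : A *m K = K *m Y.
  have := AT; rewrite -[M in RHS]submxK mul_mx_row mul_row_block urM mulmx0 add0r.
  by case/eq_row_mx.
exists Y; split.
  by rewrite -(char_poly_similar A uT) -/M -[M]submxK ulM urM char_poly_lblock.
have AXK j : A ^+ j *m K = K *m Y ^+ j.
  elim: j => [|j IH]; first by rewrite !expr0 mul1mx mulmx1.
  by rewrite !exprS -!mulmxE -mulmxA IH mulmxA AK -mulmxA.
have KP : (1%:M - S *m P) *m K = K by rewrite mulmxBl mul1mx -mulmxA PK mulmx0 subr0.
have K_inj (X : 'M_r) : K *m X = 0 -> X = 0.
  move=> KX0; have : T *m col_mx 0 X = 0 by rewrite mul_row_col mulmx0 add0r.
  move/(congr1 (mulmx (invmx T))); rewrite mulmxA mulVmx // mul1mx mulmx0.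
  by rewrite -col_mx0 => /eq_col_mx [].
apply/eqP; rewrite -subr_eq0; apply/eqP/K_inj.
by rewrite mulmxBr -!AXK -mulmxBl -KP mulmxA per_ker mul0mx.
Qed.

Lemma char_poly_quotient n n1 (A : 'M[F]_n) (A1 : 'M_n1) (P : 'M_(n1, n))
    (S : 'M_(n, n1)) (N L : nat) : (n1 <= n)%N ->
  P *m S = 1%:M -> P *m A = A1 *m P ->
  (A ^+ (N + L) - A ^+ N) *m (1%:M - S *m P) = 0 ->
  exists r (Y : 'M_r), char_poly A = char_poly A1 * char_poly Y /\ Y ^+ (N + L) = Y ^+ N.
Proof.
move=> /subnKC def_n; rewrite -{}def_n in A P S *.
move=> PS PA per_ker; have [Y] := char_poly_quotient_block PS PA per_ker.
by exists (n - n1)%N, Y.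
Qed.

End QuotientCharPoly.

Lemma map_mxXn (R1 R2 : nzRingType) (f : {rmorphism R1 -> R2}) r (A : 'M[R1]_r) j :
  map_mx f (A ^+ j) = map_mx f A ^+ j.
Proof.
elim: j => [|j IH]; first by rewrite !expr0 map_mx1.
by rewrite !exprS -!mulmxE map_mxM IH.
Qed.

Lemma root_char_poly_periodic (F K : fieldType) (f : {rmorphism F -> K}) r
    (Y : 'M[F]_r) N L :
  Y ^+ (N + L) = Y ^+ N ->
  forall z, root (map_poly f (char_poly Y)) z -> z = 0 \/ z ^+ L = 1.
Proof.
move=> per z; rewrite map_char_poly -eigenvalue_root_char => /eigenvalueP [v vY v_neq0].
have vYX j : v *m map_mx f Y ^+ j = z ^+ j *: v.
  elim: j => [|j IH]; first by rewrite !expr0 mulmx1 scale1r.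
  by rewrite exprSr -mulmxE mulmxA IH -scalemxAl vY scalerA -exprSr.
have := vYX (N + L); rewrite -map_mxXn per map_mxXn vYX => /eqP.
rewrite -subr_eq0 -scalerBl scaler_eq0 (negbTE v_neq0) orbF subr_eq0 exprD => /eqP zNL.
have [->|z_neq0] := eqVneq z 0; [by left | right].
by apply: (mulfI (expf_neq0 N z_neq0)); rewrite mulr1.
Qed.

Local Notation QPhi n := (map_poly (intr : int -> rat) 'Phi_n).

Section CyclotomicFactorization.

Definition zero_or_unity_roots (L : nat) (Q : {poly rat}) :=
  forall z : algC, root (map_poly ratr Q) z -> z = 0 \/ z ^+ L = 1.

Lemma Cyclotomic_dvdp_root n (z : algC) (Q : {poly rat}) :
  n.-primitive_root z -> root (map_poly ratr Q) z -> QPhi n %| Q.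
Proof.
move=> prim_z Qz; have [p [def_p _] dvd_p] := minCpolyP z.
suff -> : QPhi n = p by rewrite -dvd_p.
apply: (@map_inj_poly _ _ (ratr : rat -> algC)); [exact: fmorph_inj | by rewrite rmorph0 |].
rewrite -def_p (minCpoly_cyclotomic prim_z) -(Cintr_Cyclotomic prim_z) -map_poly_comp.
by apply: eq_map_poly => x /=; rewrite ratr_int.
Qed.

Lemma zero_or_unity_roots_factor L Q : (0 < L)%N -> zero_or_unity_roots L Q ->
  (1 < size Q)%N -> exists2 D, D %| Q & D = 'X \/ exists2 n, (0 < n)%N & D = QPhi n.
Proof.
move=> L_gt0 rootsQ sizeQ.
have /closed_rootP [z Qz] : size (map_poly (ratr : rat -> algC) Q) != 1%N.
  by rewrite size_map_poly gtn_eqF.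
have [z0 | zL] := rootsQ z Qz.
  exists 'X; last by left.
  rewrite -(subr0 'X) -polyC0 dvdp_XsubCl.
  by rewrite -(fmorph_root (ratr : {rmorphism rat -> algC})) rmorph0 -z0.
have [n prim_z _] := prim_order_exists L_gt0 zL.
exists (QPhi n); first exact: Cyclotomic_dvdp_root prim_z Qz.
by right; exists n; first exact: prim_order_gt0 prim_z.
Qed.

Lemma cyclotomic_factorization L Q : (0 < L)%N -> Q \is monic -> zero_or_unity_roots L Q ->
  exists (s : seq nat) (d : nat),
    all (fun n => 0 < n)%N s /\ Q = \prod_(n <- s) QPhi n * 'X^d.
Proof.
move=> L_gt0; have [k] := ubnP (size Q); elim: k Q => // k IH Q /ltnSE sizeQ monQ rootsQ.
have [size_le1 | size_gt1] := leqP (size Q) 1.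
  exists [::], 0%N; rewrite big_nil expr0 mulr1; split=> //.
  have /size_poly1P [c _ def_Q] : size Q == 1%N.
    by rewrite eqn_leq size_le1 size_poly_gt0 monic_neq0.
  by move: monQ; rewrite def_Q monicE lead_coefC => /eqP ->.
have [D dvdDQ def_D] := zero_or_unity_roots_factor L_gt0 rootsQ size_gt1.
have [monD sizeD] : D \is monic /\ (1 < size D)%N.
  case: def_D => [-> | [n n_gt0 ->]]; first by rewrite monicX size_polyX.
  rewrite monic_map ?Cyclotomic_monic // size_map_inj_poly ?size_Cyclotomic //.
    by rewrite ltnS totient_gt0.
  exact: intr_inj.
have def_Q := divpK dvdDQ; set Q' := Q %/ D in def_Q.
have monQ' : Q' \is monic by rewrite -(monicMr _ monD) def_Q.
have sizeQ' : (size Q' < k)%N.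
  move: sizeQ; rewrite -def_Q size_Mmonic ?monic_neq0 //; apply: leq_trans.
  by rewrite ltn_predRL -addn1 ltn_add2l.
have rootsQ' : zero_or_unity_roots L Q'.
  by move=> z Q'z; apply: rootsQ; rewrite -def_Q rmorphM rootM Q'z.
have [s [d [s_gt0 def_Q']]] := IH Q' sizeQ' monQ' rootsQ'.
rewrite -def_Q def_Q'; case: def_D => [-> | [n n_gt0 ->]].
  by exists s, d.+1; rewrite exprSr mulrA.
exists (n :: s), d; split; first by rewrite /= n_gt0.
by rewrite big_cons mulrAC [QPhi n * _]mulrC.
Qed.

End CyclotomicFactorization.

Lemma map_adj_mx (R1 R2 : nzRingType) (f : {rmorphism R1 -> R2}) Phi q M :
  map_mx f (adj_mx R1 Phi q M) = adj_mx R2 Phi q M.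
Proof. by apply/matrixP => i j; rewrite !mxE rmorph_nat. Qed.

Lemma char_poly_adj_mx_factor Phi p q m :
  (0 < p)%N -> (0 < m)%N -> (p %| m)%N -> periodic Phi p q ->
  exists (s : seq nat) (d : nat), all (fun n => 0 < n)%N s /\
    char_poly (adj_mx rat Phi q m) =
      char_poly (adj_mx rat Phi q p) * \prod_(n <- s) QPhi n * 'X^d.
Proof.
move=> p_gt0 m_gt0 p_dvd_m Phi_per.
have [r [Y [def_char perY]]] := char_poly_quotient
  (card_qvert_le q p_gt0 m_gt0 p_dvd_m) (Pmx_Smx rat q p_gt0 m_gt0 p_dvd_m)
  (Pmx_adj_mx rat p_gt0 m_gt0 p_dvd_m Phi_per) (Gmx_ker rat p_gt0 m_gt0 p_dvd_m Phi_per).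
have [s [d [s_gt0 def_charY]]] := cyclotomic_factorization (fact_gt0 _)
  (char_poly_monic Y) (root_char_poly_periodic (f := ratr) perY).
by exists s, d; rewrite def_char def_charY mulrA.
Qed.

Theorem theorem5p1 (R : realType) (Phi : labeling) (p q : nat)
  (hp : (0 < p)%N) (hper : periodic Phi p q) (k : nat) (hk : (0 < k)%N) :
  exists (s : seq nat) (d : nat),
    all (fun n => (0 < n)%N) s /\
    char_poly (A_k R Phi p q k) =
      char_poly (A_k R Phi p q 1)
      * \prod_(n <- s) map_poly (intr : int -> R) 'Phi_n
      * 'X^d.
Proof.
have kp_gt0 : (0 < k * p)%N by rewrite muln_gt0 hk hp.
have [s [d [s_gt0 factor]]] :=
  char_poly_adj_mx_factor hp kp_gt0 (dvdn_mull k (dvdnn p)) hper.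
have A_kE j : A_k R Phi p q j = map_mx ratr (adj_mx rat Phi q (j * p)).
  by rewrite map_adj_mx.
exists s, d; split=> //.
rewrite !A_kE mul1n -!map_char_poly factor !rmorphM rmorph_prod /= map_polyXn.
congr (_ * _ * _); apply: eq_bigr => n _; rewrite -map_poly_comp.
by apply: eq_map_poly => x /=; rewrite ratr_int.
Qed.
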